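(* Let $\ell$ be an odd prime and suppose that $|S^2(\ell,T)|=o(T)$ as $T\to\infty$. Then $$|\{1\le n\le X: \Phi_\ell(n)\text{ is square-free}\}|\sim C X \quad\text{as } X\to\infty,$$ where $C=\prod_p\left(1-\frac{\delta(p^2)}{p^2}\right)$ (product over all primes $p$) and $\delta(N)=|\{a \bmod N: \Phi_\ell(a)\equiv 0 \pmod N\}|$.
   Context: $\Phi_\ell(X)$ denotes the $\ell$-th cyclotomic polynomial. For a natural number $n$, $R_\ell(n):=\min\{d\in\mathbb{N}: n\mid \Phi_\ell(d)\}$ if such $d$ exists, and $R_\ell(n)=\infty$ otherwise. $\mathbb{P}$ denotes the set of primes $p$ that divide $\Phi_\ell(d)$ for some $d\in\mathbb{N}$. For real $T$, $S^2(\ell,T):=\{p\in\mathbb{P}: R_\ell(p^2)\le T\}$. *)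

From mathcomp Require Import all_boot all_order all_algebra all_field.
From mathcomp Require Import all_classical all_reals all_analysis.
Set Implicit Arguments. Unset Strict Implicit. Unset Printing Implicit Defensive.
Import Order.TTheory GRing.Theory Num.Theory.
Local Open Scope ring_scope.

Definition PhiZ (l : nat) (a : int) : int := (Cyclotomic l).[a].

(* square-freeness of an integer z: z <> 0 and no p^2 (p prime) divides z.
   Primes dividing z <> 0 satisfy p <= |z|, so the quantifier is bounded. *)
Definition sqfreeZ (z : int) : bool :=
  (z != 0) && [forall p : 'I_(`|z|%N.+1), prime p ==> ~~ ((p ^ 2)%:Z %| z)%Z].

Definition count_sqfree (l X : nat) : nat :=
  #|[set n : 'I_X.+1 | (0 < n)%N && sqfreeZ (PhiZ l (nat_of_ord n)%:Z)]|.

(* R_l(m) <= T  <->  exists d in N (d >= 1), d <= T, m | Phi_l(d). *)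
Definition R_le (l m T : nat) : bool :=
  [exists d : 'I_T.+1, (0 < d)%N && ((m%:Z) %| PhiZ l (nat_of_ord d)%:Z)%Z].

(* |S^2(l,T)| = #{p prime : R_l(p^2) <= T} (such p automatically lie in the
   set P).  Any such p satisfies p^2 | Phi_l(d) for some 1 <= d <= T, with
   Phi_l(d) >= 1, so p < 1 + sum_{d<=T} |Phi_l(d)|; the count is over that range. *)
Definition S2bound (l T : nat) : nat := (\sum_(d < T.+1) `|PhiZ l (nat_of_ord d)%:Z|%N).+1.

Definition S2card (l T : nat) : nat :=
  #|[set p : 'I_(S2bound l T) | prime p && R_le l (p ^ 2) T]|.

Definition delta (l N : nat) : nat :=
  #|[set a : 'I_N | ((N%:Z) %| PhiZ l (nat_of_ord a)%:Z)%Z]|.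

Definition Cpart (R : realType) (l : nat) (N : nat) : R :=
  \prod_(p < N | prime p) (1 - (delta l (p ^ 2))%:R / (p ^ 2)%:R).

From mathcomp Require Import all_boot all_order all_algebra all_field.
From mathcomp Require Import all_classical all_reals all_analysis.
From mathcomp Require Import zify ring lra.
Import Order.TTheory GRing.Theory Num.Theory numFieldNormedType.Exports.
Set Implicit Arguments. Unset Strict Implicit. Unset Printing Implicit Defensive.

(* For a prime l, Phi_l(n) = 1 + n + ... + n^(l-1).  Whether p^2 divides Phi_l(n)
   depends only on n mod p^2, so by the Chinese remainder theorem the n that are
   not divisible by p^2 for any prime p < x form a periodic set whose density is
   exactly the partial Euler product C_x = prod_(p < x) (1 - delta(p^2)/p^2).
   Hensel lifting shows that for p <> l a root of Phi_l modulo p^2 is determined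
   by its residue modulo p, so delta(p^2) <= l^2 for every p.  An n <= X that
   survives this sieve but is not square-free has p^2 | Phi_l(n) for a prime
   p >= x with R_l(p^2) <= X; there are at most l^2 (X/(x-1) + |S^2(l,X)|) such n.
   Hence the square-free count is C_x X + O(l^2 X / x) + o(X), and letting X and
   then x tend to infinity gives C X.  The limit C is positive because
   sum_p delta(p^2)/p^2 <= l^2 sum_p 1/p^2 converges. *)

Definition repunit (l n : nat) : nat := \sum_(i < l) n ^ i.

Lemma Cyclotomic_prime l : prime l -> Cyclotomic l = (\sum_(i < l) 'X^i)%R.
Proof.
move=> l_pr; have l_gt0 := prime_gt0 l_pr.
have divisors_l : divisors l = [:: 1; l].
  apply: (sorted_eq leq_trans anti_leq (sorted_divisors l)).
    by rewrite /= andbT ltnW ?prime_gt1.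
  apply: uniq_perm; rewrite ?divisors_uniq //= ?inE ?andbT ?neq_ltn ?prime_gt1 //.
  move=> d; rewrite -dvdn_divisors // !inE.
  by apply/idP/orP => [/(primeP l_pr).2/orP | [] /eqP ->].
have := prod_Cyclotomic l_gt0; rewrite divisors_l big_cons big_seq1.
have -> : Cyclotomic 1 = ('X - 1)%R.
  by have := prod_Cyclotomic (ltn0Sn 0); rewrite big_seq1 expr1.
by rewrite subrX1 => /mulfI; apply; rewrite -polyC1 polyXsubC_eq0.
Qed.

Lemma PhiZ_repunit l (n : nat) : prime l -> PhiZ l n = repunit l n.
Proof.
move=> l_pr; rewrite /PhiZ Cyclotomic_prime // horner_sum /repunit -[in RHS]natz natr_sum.
by apply: eq_bigr => i _; rewrite hornerXn natrX natz.
Qed.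

Lemma repunit_gt0 l n : 0 < l -> 0 < repunit l n.
Proof. by case: l => // l _; rewrite /repunit big_ord_recl expn0 addnC addn1. Qed.

Lemma repunit0 l : 0 < l -> repunit l 0 = 1.
Proof.
case: l => // l _; rewrite /repunit big_ord_recl big1 // => i _.
by rewrite exp0n.
Qed.

Lemma repunitS l n : repunit l.+1 n = repunit l n + n ^ l.
Proof. by rewrite /repunit big_ord_recr. Qed.

Lemma expn_repunit l n : 0 < n -> n ^ l = (n - 1) * repunit l n + 1.
Proof.
case: n => // n _; elim: l => [|l IHl]; first by rewrite /repunit big_ord0 muln0.
by rewrite repunitS expnS IHl; nia.
Qed.

Lemma repunit_mod l n m : repunit l n = repunit l (n %% m) %[mod m].
Proof.
elim: l => [|l IHl]; first by rewrite /repunit !big_ord0.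
by rewrite !repunitS -modnDm IHl modnDm -[in RHS]modnDmr modnXm modnDmr.
Qed.

Lemma dvdn_repunit_mod l n m d : d %| m -> (d %| repunit l n) = (d %| repunit l (n %% m)).
Proof.
by move=> d_dvd_m; rewrite /dvdn (repunit_mod l n) (repunit_mod l (n %% m)) modn_dvdm.
Qed.

Definition sqfree_below (x m : nat) : bool :=
  all (fun p => ~~ (prime p && (p ^ 2 %| m))) (iota 0 x).

Lemma sqfree_belowP x m :
  reflect (forall p, prime p -> p < x -> ~~ (p ^ 2 %| m)) (sqfree_below x m).
Proof.
apply: (iffP allP) => [free p p_pr p_lt_x | free p].
  by have := free p; rewrite mem_iota p_lt_x p_pr => /(_ isT).
by rewrite mem_iota => /= p_lt_x; apply/nandP; case p_pr: (prime p); [right; apply: free|left].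
Qed.

Lemma prime_sq_dvd_le p m : 0 < m -> prime p -> p ^ 2 %| m -> p <= m.
Proof.
move=> m_gt0 p_pr /(dvdn_leq m_gt0); apply: leq_trans.
by rewrite -[leqLHS]expn1 leq_pexp2l ?prime_gt0.
Qed.

Lemma sqfreeZ_nat m : 0 < m -> sqfreeZ m = sqfree_below m.+1 m.
Proof.
move=> m_gt0; rewrite /sqfreeZ absz_nat lt0n_neq0 //=.
apply/forallP/sqfree_belowP => [free p p_pr p_le_m | free p].
  by have := free (Ordinal p_le_m); rewrite p_pr dvdzE !absz_nat.
by apply/implyP => p_pr; rewrite dvdzE !absz_nat free.
Qed.

Lemma sqfree_belowS x m : sqfree_below x.+1 m = sqfree_below x m && ~~ (prime x && (x ^ 2 %| m)).
Proof. by rewrite /sqfree_below -[x.+1]addn1 iotaD all_cat /= andbT. Qed.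

Lemma sqfree_belowW x m : 0 < m -> sqfree_below m.+1 m -> sqfree_below x m.
Proof.
move=> m_gt0 /sqfree_belowP free; apply/sqfree_belowP => p p_pr _; apply/negP => p2_dvd.
by have := free p p_pr; rewrite ltnS prime_sq_dvd_le // p2_dvd => /(_ isT).
Qed.

Lemma card_ord_count N (P : pred nat) : #|[set n : 'I_N | P n]| = count P (iota 0 N).
Proof.
rewrite -sum1_card -sum1_count -[N in iota 0 N]subn0 -/(index_iota 0 N).
by rewrite (big_mkord P); apply: eq_bigl => i; rewrite inE.
Qed.

Section CountsAtPrime.

Variable l : nat.
Hypothesis l_pr : prime l.

Lemma delta_count N : delta l N = count (fun a => N %| repunit l a) (iota 0 N).
Proof.
rewrite /delta -card_ord_count; apply: eq_card => a; rewrite !inE.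
by rewrite PhiZ_repunit // dvdzE !absz_nat.
Qed.

Lemma count_sqfree_count X : count_sqfree l X =
  count (fun n => sqfree_below (repunit l n).+1 (repunit l n)) (iota 1 X).
Proof.
rewrite /count_sqfree (card_ord_count _ (fun n => (0 < n) && sqfreeZ (PhiZ l n))) /=.
apply: eq_in_count => n; rewrite mem_iota => /andP[n_gt0 _].
by rewrite n_gt0 PhiZ_repunit // sqfreeZ_nat // repunit_gt0 ?prime_gt0.
Qed.

Lemma R_le_has m T : R_le l m T = has (fun d => m %| repunit l d) (iota 1 T).
Proof.
apply/existsP/hasP => [[d /andP[d_gt0 m_dvd]] | [d]].
  exists (val d); first by rewrite mem_iota d_gt0 add1n ltn_ord.
  by move: m_dvd; rewrite PhiZ_repunit // dvdzE !absz_nat.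
rewrite mem_iota add1n => /andP[d_gt0 d_le_T] m_dvd; exists (Ordinal d_le_T).
by rewrite /= d_gt0 PhiZ_repunit // dvdzE !absz_nat.
Qed.

Lemma S2card_count T :
  S2card l T = count (fun p => prime p && R_le l (p ^ 2) T) (iota 0 (S2bound l T)).
Proof. exact: card_ord_count. Qed.

Lemma repunit_lt_S2bound n T : n <= T -> repunit l n < S2bound l T.
Proof.
move=> n_le_T; rewrite /S2bound ltnS (bigD1 (inord n)) //= inordK ?ltnS //.
by rewrite PhiZ_repunit // absz_nat leq_addr.
Qed.

End CountsAtPrime.

Section PeriodicCount.

Variable P : pred nat.

Lemma count_iota_leq a b : a <= b -> count P (iota 0 a) <= count P (iota 0 b).
Proof. by move=> a_le_b; rewrite -(subnKC a_le_b) iotaD count_cat leq_addr. Qed.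

Variable M : nat.
Hypothesis P_mod : forall n, P n = P (n %% M).

Lemma count_iota_periodic k : count P (iota 0 (k * M)) = k * count P (iota 0 M).
Proof.
elim: k => [|k IHk]; first by rewrite !mul0n.
rewrite mulSn addnC iotaD count_cat IHk add0n -[in iota (k * M) _](addn0 (k * M)).
rewrite iotaDl count_map addnC; congr (_ + _); apply: eq_count => n /=.
by rewrite P_mod [in RHS]P_mod modnMDl.
Qed.

Lemma count_iota_periodic_bounds N : 0 < M ->
  (N %/ M) * count P (iota 0 M) <= count P (iota 0 N) <= (N %/ M).+1 * count P (iota 0 M).
Proof.
move=> M_gt0; rewrite -!count_iota_periodic !count_iota_leq ?leq_trunc_div //.
by rewrite mulSn {1}(divn_eq N M) addnC leq_add2r ltnW ?ltn_pmod.
Qed.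

End PeriodicCount.

Lemma count_iota_crt m1 m2 (P Q : pred nat) : coprime m1 m2 -> 0 < m1 -> 0 < m2 ->
    (forall n, P n = P (n %% m1)) -> (forall n, Q n = Q (n %% m2)) ->
  count (predI P Q) (iota 0 (m1 * m2)) = count P (iota 0 m1) * count Q (iota 0 m2).
Proof.
move=> co_m12 m1_gt0 m2_gt0 P_mod Q_mod.
pose f (n : 'I_(m1 * m2)) := (Ordinal (ltn_pmod n m1_gt0), Ordinal (ltn_pmod n m2_gt0)).
have f_inj : injective f.
  move=> a b [/eqP a_b1 /eqP a_b2]; apply: val_inj => /=.
  have : a == b %[mod m1 * m2] by rewrite chinese_remainder // a_b1 a_b2.
  by rewrite !modn_small // => /eqP.
have f_bij : bijective f by apply: inj_card_bij; rewrite // card_prod !card_ord.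
rewrite -!card_ord_count -cardsX -(on_card_preimset (onW_bij _ f_bij)).
by apply: eq_card => n; rewrite !inE /= -P_mod -Q_mod.
Qed.

Lemma expn_1DpM_mod p t k : (1 + p * t) ^ k = 1 + k * p * t %[mod p ^ 2].
Proof.
have [s ->] : exists s, (1 + p * t) ^ k = 1 + k * p * t + p ^ 2 * s.
  elim: k => [|k [s IHk]]; first by exists 0; rewrite expn0 !muln0 mul0n !addn0.
  by exists (k * t ^ 2 + s + p * s * t); rewrite expnS IHk; ring.
by rewrite addnC mulnC modnMDl.
Qed.

Lemma eq1_mod_prime_sq p l x : prime p -> prime l -> p != l ->
  x = 1 %[mod p] -> x ^ l = 1 %[mod p ^ 2] -> x = 1 %[mod p ^ 2].
Proof.
move=> p_pr l_pr p_neq_l x_1 xl_1; have p_gt0 := prime_gt0 p_pr.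
have x_gt0 : 0 < x by case: x x_1 {xl_1} => // /esym; rewrite mod0n modn_small ?prime_gt1.
have [t def_x] : exists t, x = 1 + p * t.
  have /dvdnP[t x1_eq] : p %| x - 1 by rewrite -eqn_mod_dvd // x_1.
  by exists t; rewrite mulnC -x1_eq subnKC.
move: xl_1; rewrite def_x expn_1DpM_mod => /eqP; rewrite eqn_mod_dvd ?leq_addr //.
rewrite addKn -mulnA mulnCA expnS expn1 dvdn_pmul2l //.
rewrite Gauss_dvdr; last by rewrite prime_coprime // dvdn_prime2.
by move=> p_dvd_t; apply/eqP; rewrite eqn_mod_dvd ?leq_addr // addKn dvdn_pmul2l.
Qed.

Section RepunitRoots.

Variable l : nat.
Hypothesis l_pr : prime l.

Let l_gt0 : 0 < l. Proof. exact: prime_gt0. Qed.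

Lemma repunit_root_gt0 m a : 1 < m -> m %| repunit l a -> 0 < a.
Proof. by case: a => // m_gt1; rewrite repunit0 // dvdn1 => /eqP m1; rewrite m1 in m_gt1. Qed.

Lemma repunit_root_expn m a : 1 < m -> m %| repunit l a -> a ^ l = 1 %[mod m].
Proof.
move=> m_gt1 m_dvd; rewrite (expn_repunit l (repunit_root_gt0 m_gt1 m_dvd)).
by rewrite -modnDml; case/dvdnP: m_dvd => k ->; rewrite mulnA modnMl.
Qed.

Lemma count_repunit_roots_mod_prime p : prime p ->
  count (fun a => p %| repunit l a) (iota 0 p) <= l.
Proof.
move=> p_pr; rewrite -size_filter; set s := seq.filter _ _.
pose f (a : nat) : 'F_p := a%:R%R.
have f_inj : {in s &, injective f}.
  move=> a b; rewrite !mem_filter !mem_iota /= => /andP[_ a_lt_p] /andP[_ b_lt_p] fab.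
  by have := val_Fp_nat p_pr a; rewrite /f in fab; rewrite fab val_Fp_nat // !modn_small.
have Xl1_neq0 : ('X^l - 1 : {poly 'F_p})%R != 0%R by rewrite -size_poly_eq0 size_Xn_sub_1.
have roots : all (root ('X^l - 1)%R) (map f s).
  apply/allP => y /mapP[a]; rewrite mem_filter => /andP[p_dvd _] ->.
  rewrite /root !hornerE /f -natrX -Fp_nat_mod //.
  by rewrite (repunit_root_expn (prime_gt1 p_pr) p_dvd) modn_small ?prime_gt1 // subrr.
have := max_poly_roots Xl1_neq0 roots.
rewrite map_inj_in_uniq ?filter_uniq ?iota_uniq // size_map size_Xn_sub_1 //.
by apply.
Qed.

Lemma repunit_root_lift p a b : prime p -> p != l ->
  p ^ 2 %| repunit l a -> p ^ 2 %| repunit l b -> a = b %[mod p] -> a = b %[mod p ^ 2].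
Proof.
move=> p_pr p_neq_l p2_dvd_a p2_dvd_b ab_p.
have p2_gt1 : 1 < p ^ 2 by rewrite -(exp1n 2) ltn_exp2r ?prime_gt1.
have al_1 := repunit_root_expn p2_gt1 p2_dvd_a.
have bl_1 := repunit_root_expn p2_gt1 p2_dvd_b.
have al_1p : a ^ l = 1 %[mod p].
  by apply: repunit_root_expn (prime_gt1 p_pr) (dvdn_trans _ p2_dvd_a); rewrite dvdn_exp.
(* x := b a^(l-1) is 1 mod p and an l-th root of unity mod p^2; as p <> l it is
   1 mod p^2, whence b = b a^l = x a = a mod p^2. *)
pose x := b * a ^ l.-1.
have x_1 : x = 1 %[mod p] by rewrite /x -modnMml -ab_p modnMml -expnS prednK.
have xl_1 : x ^ l = 1 %[mod p ^ 2].
  rewrite /x expnMn -expnM [_ * l]mulnC expnM -modnMml bl_1 modnMml mul1n.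
  by rewrite -modnXm al_1 modnXm exp1n.
have ba_a : b * a ^ l = a %[mod p ^ 2].
  have x_1p2 := eq1_mod_prime_sq p_pr l_pr p_neq_l x_1 xl_1.
  by rewrite -[l]prednK // expnS mulnCA -modnMmr x_1p2 modnMmr muln1.
by rewrite -ba_a -modnMmr al_1 modnMmr muln1.
Qed.

Lemma delta_prime_sq_le p : prime p -> delta l (p ^ 2) <= l ^ 2.
Proof.
move=> p_pr; rewrite delta_count //; have [<- | p_neq_l] := eqVneq p l.
  by rewrite (leq_trans (count_size _ _)) // size_iota.
have lift_inj : count (fun a => p ^ 2 %| repunit l a) (iota 0 (p ^ 2)) <=
                count (fun a => p %| repunit l a) (iota 0 p).
  rewrite -!size_filter -(size_map (modn^~ p)) uniq_leq_size //.
    rewrite map_inj_in_uniq ?filter_uniq ?iota_uniq //.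
    move=> a b; rewrite !mem_filter !mem_iota /= => /andP[a_root a_lt] /andP[b_root b_lt] ab_p.
    by have := repunit_root_lift p_pr p_neq_l a_root b_root ab_p; rewrite !modn_small.
  move=> y /mapP[a]; rewrite mem_filter => /andP[a_root _] ->.
  rewrite mem_filter mem_iota add0n ltn_pmod ?prime_gt0 // leq0n !andbT -dvdn_repunit_mod //.
  by apply: dvdn_trans a_root; rewrite dvdn_exp.
apply: leq_trans lift_inj (leq_trans (count_repunit_roots_mod_prime p_pr) _).
by rewrite expnS expn1 leq_pmulr.
Qed.

Lemma delta_prime_sq_lt p : prime p -> delta l (p ^ 2) < p ^ 2.
Proof.
move=> p_pr; rewrite delta_count // -[ltnRHS](size_iota 0).
rewrite -(count_predC (fun a => p ^ 2 %| repunit l a)) -[ltnLHS]addn0 ltn_add2l -has_count.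
apply/hasP; exists 0; first by rewrite mem_iota expn_gt0 prime_gt0.
by rewrite /= repunit0 // dvdn1 -(exp1n 2) eqn_exp2r // neq_ltn prime_gt1 ?orbT.
Qed.

End RepunitRoots.

Definition sq_primorial x := \prod_(p < x | prime p) p ^ 2.

Lemma sq_primorialS x : sq_primorial x.+1 = sq_primorial x * (if prime x then x ^ 2 else 1).
Proof. by rewrite /sq_primorial big_mkcond big_ord_recr /= -big_mkcond; case: (prime x). Qed.

Lemma sq_primorial_gt0 x : 0 < sq_primorial x.
Proof. by rewrite prodn_cond_gt0 // => p p_pr; rewrite expn_gt0 prime_gt0. Qed.

Lemma dvdn_sq_primorial x p : prime p -> p < x -> p ^ 2 %| sq_primorial x.
Proof.
move=> p_pr; elim: x => // x IHx; rewrite ltnS leq_eqVlt sq_primorialS.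
by case/orP => [/eqP <- | /IHx]; [rewrite p_pr dvdn_mull | apply: dvdn_mulr].
Qed.

Lemma coprime_sq_primorial x y : prime y -> x <= y -> coprime (sq_primorial x) (y ^ 2).
Proof.
move=> y_pr; elim: x => [|x IHx] x_le_y; first by rewrite /sq_primorial big_ord0 coprime1n.
rewrite sq_primorialS coprimeMl IHx ?(ltnW x_le_y) //; case: ifP => x_pr; last exact: coprime1n.
by rewrite coprimeXl // coprimeXr // prime_coprime // dvdn_prime2 // neq_ltn x_le_y.
Qed.

Section LocalDensity.

Variable l : nat.
Hypothesis l_pr : prime l.

Lemma sqfree_below_repunit_mod x n :
  sqfree_below x (repunit l n) = sqfree_below x (repunit l (n %% sq_primorial x)).
Proof.
apply: eq_in_all => p; rewrite mem_iota /= => p_lt_x.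
by case p_pr: (prime p); rewrite //= -dvdn_repunit_mod // dvdn_sq_primorial.
Qed.

Definition local_count x :=
  count (fun n => sqfree_below x (repunit l n)) (iota 0 (sq_primorial x)).

Lemma local_countS x :
  local_count x.+1 = local_count x * (if prime x then x ^ 2 - delta l (x ^ 2) else 1).
Proof.
rewrite /local_count sq_primorialS; case: ifP => x_pr; last first.
  by rewrite !muln1; apply: eq_count => n; rewrite sqfree_belowS x_pr andbT.
rewrite (eq_count (a2 := predI (fun n => sqfree_below x (repunit l n))
                               (fun n => ~~ (x ^ 2 %| repunit l n)))); last first.
  by move=> n; rewrite sqfree_belowS x_pr.
rewrite count_iota_crt ?coprime_sq_primorial ?sq_primorial_gt0 ?expn_gt0 ?prime_gt0 //.
- rewrite delta_count //; congr (_ * _).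
  by rewrite -[X in X - _](size_iota 0) -(count_predC (fun a => x ^ 2 %| repunit l a)) addKn.
- exact: sqfree_below_repunit_mod.
- by move=> n /=; rewrite -dvdn_repunit_mod.
Qed.

End LocalDensity.

Lemma count_in_leq_addn (T : eqType) (a b c : pred T) (s : seq T) :
  {in s, forall n, a n -> b n || c n} -> count a s <= count b s + count c s.
Proof.
move=> a_sub; rewrite -count_predUI (@eq_in_count _ a (predI a (mem s))); last first.
  by move=> n n_in /=; rewrite n_in andbT.
apply: leq_trans (leq_addr _ _); apply: sub_count => n /andP[a_n n_in]; exact: a_sub.
Qed.

Lemma count_has_leq (S T : Type) (P : S -> pred T) (s : seq S) (r : seq T) :
  count (fun n => has (P^~ n) s) r <= \sum_(p <- s) count (P p) r.
Proof.
elim: s => [|p s IHs]; first by rewrite big_nil; elim: r.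
rewrite big_cons (leq_trans _ (leq_add (leqnn _) IHs)) // -count_predUI.
exact: leq_addr.
Qed.

Section MainSieve.

Variable l : nat.
Hypothesis l_pr : prime l.

Lemma count_repunit_sq_dvd p X : prime p ->
  count (fun n => p ^ 2 %| repunit l n) (iota 1 X) <= l ^ 2 * (X %/ p ^ 2).+1.
Proof.
move=> p_pr; have p2_gt0 : 0 < p ^ 2 by rewrite expn_gt0 prime_gt0.
rewrite mulnC (leq_trans _ (leq_mul (leqnn _) (delta_prime_sq_le l_pr p_pr))) //.
rewrite delta_count // -count_iota_periodic; last by move=> n; rewrite -dvdn_repunit_mod.
apply: leq_trans (count_iota_leq _ (_ : X.+1 <= _)); first exact: leq_addl.
by rewrite mulSn {1}(divn_eq X (p ^ 2)) addnC -addSn leq_add2r ltn_pmod.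
Qed.

Lemma sieved_sqfree_or_large_sq_factor x X n : (0 < n <= X)%N ->
    sqfree_below x (repunit l n) ->
  sqfree_below (repunit l n).+1 (repunit l n) ||
  has (fun p => [&& prime p, R_le l (p ^ 2) X & p ^ 2 %| repunit l n])
      (index_iota x (S2bound l X)).
Proof.
move=> /andP[n_gt0 n_le_X] sieved.
case: (boolP (sqfree_below _ _)) => //= /allPn[p].
rewrite mem_iota ltnS negbK => /andP[_ p_le_m] /andP[p_pr p2_dvd].
have p_ge_x : x <= p.
  rewrite leqNgt; apply: contraL sieved => p_lt_x.
  by apply/sqfree_belowP => /(_ p p_pr p_lt_x); rewrite p2_dvd.
have R_le_p : R_le l (p ^ 2) X.
  by rewrite R_le_has //; apply/hasP; exists n; rewrite ?mem_iota ?add1n ?ltnS ?n_gt0.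
apply/hasP; exists p; rewrite ?p_pr ?p2_dvd ?R_le_p // mem_index_iota p_ge_x.
exact: leq_ltn_trans p_le_m (repunit_lt_S2bound l_pr n_le_X).
Qed.

Lemma count_sqfree_below_le x X :
  count (fun n => sqfree_below x (repunit l n)) (iota 1 X) <=
  count_sqfree l X + l ^ 2 * (\sum_(x <= p < S2bound l X) X %/ p ^ 2 + S2card l X).
Proof.
set B := S2bound l X; pose bad p n := [&& prime p, R_le l (p ^ 2) X & p ^ 2 %| repunit l n].
rewrite count_sqfree_count //.
apply: leq_trans (count_in_leq_addn
  (b := fun n => sqfree_below (repunit l n).+1 (repunit l n))
  (c := fun n => has (bad^~ n) (index_iota x B)) _) _.
  by move=> n; rewrite mem_iota add1n ltnS; apply: sieved_sqfree_or_large_sq_factor.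
rewrite leq_add2l (leq_trans (count_has_leq _ _ _)) //.
apply: (@leq_trans (\sum_(x <= p < B) l ^ 2 * (X %/ p ^ 2 + (prime p && R_le l (p ^ 2) X)))).
  apply: leq_sum => p _; case: (boolP (prime p && _)) => [/andP[p_pr _] | not_bad].
    rewrite addn1 (leq_trans _ (@count_repunit_sq_dvd p X p_pr)) //.
    by apply: sub_count => n /and3P[].
  by rewrite (@eq_count _ _ pred0) ?count_pred0 // => n; rewrite /bad andbA (negbTE not_bad).
rewrite -big_distrr /= leq_pmul2l ?expn_gt0 ?prime_gt0 // big_split /= leq_add2l.
rewrite (@big_nat_widenl _ _ _ x 0 _ _ _ (leq0n x)) big_mkcond S2card_count //.
rewrite -sum1_count [leqRHS]big_mkcond /index_iota subn0; apply: leq_sum => p _.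
by case: (x <= p); case: (_ && _).
Qed.

End MainSieve.

Section RealBounds.

Variable R : realType.
Local Open Scope ring_scope.

Lemma prodr_1B_ge (I : Type) (r : seq I) (P : pred I) (a : I -> R) :
    (forall i, P i -> 0 <= a i <= 1) ->
  1 - \sum_(i <- r | P i) a i <= \prod_(i <- r | P i) (1 - a i).
Proof.
move=> a01; elim: r => [|i r IHr]; first by rewrite !big_nil subr0.
rewrite !big_cons; case: ifP => // Pi; have /andP[ai_ge0 ai_le1] := a01 i Pi.
have sum_ge0 : 0 <= \sum_(j <- r | P j) a j.
  by apply: sumr_ge0 => j /a01 /andP[].
have prod_ge0 : 0 <= \prod_(j <- r | P j) (1 - a j).
  by apply: prodr_ge0 => j /a01 /andP[_]; rewrite subr_ge0.
nra.
Qed.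

Lemma invr_sqS_le (a : R) : 0 < a -> ((a + 1) ^+ 2)^-1 <= a^-1 - (a + 1)^-1.
Proof.
move=> a_gt0; have a1_gt0 : 0 < a + 1 by rewrite addr_gt0.
have -> : a^-1 - (a + 1)^-1 = (a * (a + 1))^-1 by field; rewrite !gt_eqF.
by rewrite lef_pV2 ?posrE ?exprn_gt0 ?mulr_gt0 // expr2 ler_pM2r // lerDl.
Qed.

Lemma sum_inv_sq_le x B : (1 < x)%N ->
  \sum_(x <= p < B) ((p ^ 2)%:R : R)^-1 <= (x.-1%:R)^-1.
Proof.
move=> x_gt1; have [B_le_x | x_lt_B] := leqP B x.
  by rewrite big_geq // invr_ge0.
pose f k : R := - (k.-1%:R)^-1.
apply: le_trans (_ : \sum_(x <= p < B) (f p.+1 - f p) <= _).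
  apply: ler_sum_nat => p /andP[x_le_p _].
  have p_gt1 : (1 < p)%N := leq_trans x_gt1 x_le_p.
  have p1_gt0 : 0 < p.-1%:R :> R by rewrite ltr0n -ltnS prednK // ltnW.
  have := invr_sqS_le p1_gt0.
  by rewrite natr1 prednK ?(ltnW p_gt1) // /f /= opprK addrC natrX.
by rewrite telescope_sumr ?(ltnW x_lt_B) // /f opprK addrC lerBlDr lerDl invr_ge0.
Qed.

Lemma sum_divn_sq_le X x B : (1 < x)%N ->
  (\sum_(x <= p < B) X %/ p ^ 2)%:R <= X%:R / x.-1%:R :> R.
Proof.
move=> x_gt1; rewrite natr_sum.
apply: le_trans (_ : \sum_(x <= p < B) X%:R * ((p ^ 2)%:R)^-1 <= _).
  apply: ler_sum_nat => p /andP[x_le_p _].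
  have p2_gt0 : 0 < (p ^ 2)%:R :> R by rewrite ltr0n expn_gt0 (leq_trans _ x_le_p) // ltnW.
  by rewrite ler_pdivlMr // -natrM ler_nat leq_trunc_div.
by rewrite -mulr_sumr ler_wpM2l ?sum_inv_sq_le.
Qed.

Lemma count_iota_periodic_dev (P : pred nat) M N : (0 < M)%N ->
    (forall n, P n = P (n %% M)%N) ->
  `|(count P (iota 0 N))%:R - N%:R * ((count P (iota 0 M))%:R / M%:R)| <=
    (count P (iota 0 M))%:R :> R.
Proof.
move=> M_gt0 P_mod; set g := count P (iota 0 M); set k := (N %/ M)%N.
have /andP[lo hi] := count_iota_periodic_bounds P_mod N M_gt0.
have N_lo : (k * M <= N)%N by rewrite leq_trunc_div.
have N_hi : (N <= k.+1 * M)%N by rewrite mulSn {1}(divn_eq N M) addnC leq_add2r ltnW ?ltn_pmod.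
have M_gt0' : 0 < M%:R :> R by rewrite ltr0n.
have Ng_lo : (k * g)%:R <= N%:R * (g%:R / M%:R) :> R.
  by rewrite mulrA ler_pdivlMr // -!natrM ler_nat mulnAC leq_mul2r N_lo orbT.
have Ng_hi : N%:R * (g%:R / M%:R) <= (k.+1 * g)%:R :> R.
  by rewrite mulrA ler_pdivrMr // -!natrM ler_nat mulnAC leq_mul2r N_hi orbT.
move: lo hi Ng_lo Ng_hi; rewrite -/g -/k -!(ler_nat R) mulSn !natrD !natrM => lo hi Ng_lo Ng_hi.
by rewrite ler_norml; apply/andP; split; lra.
Qed.

End RealBounds.

Section EulerProduct.

Variable R : realType.
Variable l : nat.
Hypothesis l_pr : prime l.
Local Open Scope classical_set_scope.
Local Open Scope ring_scope.

Let rho p : R := (delta l (p ^ 2))%:R / (p ^ 2)%:R.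

Lemma rho_ge0_le1 p : prime p -> 0 <= rho p <= 1.
Proof.
move=> p_pr; have p2_gt0 : 0 < (p ^ 2)%:R :> R by rewrite ltr0n expn_gt0 prime_gt0.
rewrite divr_ge0 //= ler_pdivrMr // mul1r ler_nat ltnW //.
exact: delta_prime_sq_lt.
Qed.

Lemma rho_le p : prime p -> rho p <= (l ^ 2)%:R * ((p ^ 2)%:R)^-1.
Proof. by move=> p_pr; rewrite ler_wpM2r ?invr_ge0 // ler_nat delta_prime_sq_le. Qed.

Lemma Cpart_split x N : (x <= N)%N ->
  Cpart R l N = Cpart R l x * \prod_(x <= p < N | prime p) (1 - rho p).
Proof.
move=> x_le_N; rewrite /Cpart -!(big_mkord prime (fun p => 1 - rho p)).
by rewrite -big_cat_nat.
Qed.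

Lemma Cpart_local_density x : Cpart R l x = (local_count l x)%:R / (sq_primorial x)%:R.
Proof.
elim: x => [|x IHx]; first by rewrite /Cpart /local_count /sq_primorial !big_ord0 divr1.
rewrite (Cpart_split (leqnSn x)) IHx big_mkcond big_nat1 local_countS // sq_primorialS.
case: ifP => x_pr; rewrite ?muln1 ?mulr1 //.
have x2_neq0 : (x ^ 2)%:R != 0 :> R by rewrite pnatr_eq0 -lt0n expn_gt0 prime_gt0.
rewrite natrM (natrM _ (sq_primorial x)) natrB ?(ltnW (delta_prime_sq_lt l_pr x_pr)) //.
by rewrite invfM mulrACA /rho mulrBl divff.
Qed.

Lemma Cpart_gt0 x : 0 < Cpart R l x.
Proof.
rewrite /Cpart prodr_gt0 // => p p_pr.
have p2_gt0 : 0 < (p ^ 2)%:R :> R by rewrite ltr0n expn_gt0 prime_gt0.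
by rewrite subr_gt0 /rho ltr_pdivrMr // mul1r ltr_nat delta_prime_sq_lt.
Qed.

Lemma Cpart_noninc : nonincreasing_seq (Cpart R l).
Proof.
move=> x N x_le_N; rewrite (Cpart_split x_le_N) ler_piMr ?(ltW (Cpart_gt0 x)) //.
apply: prodr_ile1 => p p_pr; have /andP[rho_ge0 rho_le1] := rho_ge0_le1 p_pr.
by rewrite subr_ge0 rho_le1 lerBlDr lerDl.
Qed.

Lemma Cpart_le1 x : Cpart R l x <= 1.
Proof. by rewrite (le_trans (Cpart_noninc (leq0n x))) // /Cpart big_ord0. Qed.

Lemma Cpart_tail_ge x N : (1 < x)%N -> (x <= N)%N ->
  Cpart R l x * (1 - (l ^ 2)%:R / x.-1%:R) <= Cpart R l N.
Proof.
move=> x_gt1 x_le_N; rewrite (Cpart_split x_le_N) ler_wpM2l ?(ltW (Cpart_gt0 x)) //.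
apply: le_trans (prodr_1B_ge _ rho_ge0_le1); rewrite lerD2l lerN2.
apply: le_trans (_ : \sum_(x <= p < N) (l ^ 2)%:R * ((p ^ 2)%:R)^-1 <= _).
  rewrite big_mkcond /=; apply: ler_sum => p _; case: ifP => [/rho_le //|_].
  by rewrite mulr_ge0 ?invr_ge0.
by rewrite -mulr_sumr ler_wpM2l ?sum_inv_sq_le.
Qed.

Lemma Cpart_cvg_gt0 : exists2 C : R, Cpart R l @ \oo --> C & 0 < C.
Proof.
have cvg_Cpart : cvgn (Cpart R l).
  apply: nonincreasing_is_cvgn Cpart_noninc _.
  by exists 0 => _ [n _ <-]; exact/ltW/Cpart_gt0.
exists (limn (Cpart R l)) => //; set x0 := (l ^ 2).+2.
have lower_gt0 : 0 < Cpart R l x0 * (1 - (l ^ 2)%:R / x0.-1%:R).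
  by rewrite mulr_gt0 ?Cpart_gt0 // subr_gt0 ltr_pdivrMr ?ltr0n // mul1r ltr_nat.
apply: lt_le_trans lower_gt0 (limr_ge cvg_Cpart _).
by exists x0 => // N /=; apply: Cpart_tail_ge.
Qed.

End EulerProduct.

Section SieveAsymptotics.

Variable R : realType.
Variable l : nat.
Hypothesis l_pr : prime l.
Local Open Scope ring_scope.

Let K : R := (l ^ 2)%:R.

Lemma count_sieved_dev x X :
  `|(count (fun n => sqfree_below x (repunit l n)) (iota 1 X))%:R - X%:R * Cpart R l x| <=
    (sq_primorial x)%:R + 1.
Proof.
set P := fun n => sqfree_below x (repunit l n).
have := count_iota_periodic_dev R X.+1 (sq_primorial_gt0 x) (sqfree_below_repunit_mod l x).
have -> : count P (iota 0 X.+1) = (P 0 + count P (iota 1 X))%N by [].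
rewrite -/(local_count l x) -(Cpart_local_density R l_pr) => dev.
rewrite natrD -[X.+1]addn1 natrD in dev.
have g_le : (local_count l x)%:R <= (sq_primorial x)%:R :> R.
  by rewrite ler_nat /local_count (leq_trans (count_size _ _)) ?size_iota.
have c_gt0 := Cpart_gt0 R l_pr x; have c_le1 := Cpart_le1 R l_pr x.
move: dev; rewrite !ler_norml => /andP[lo hi]; apply/andP.
by case: (P 0) lo hi; rewrite /= ?mulr0n ?mulr1n => lo hi; split; lra.
Qed.

Lemma count_sqfree_dev x X : (1 < x)%N ->
  `|(count_sqfree l X)%:R - X%:R * Cpart R l x| <=
    (sq_primorial x)%:R + 1 + K * (X%:R / x.-1%:R + (S2card l X)%:R).
Proof.
move=> x_gt1; set S := count (fun n => sqfree_below x (repunit l n)) (iota 1 X).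
have sqfree_le_S : (count_sqfree l X <= S)%N.
  rewrite count_sqfree_count //; apply: sub_count => n.
  exact/sqfree_belowW/repunit_gt0/prime_gt0.
have S_le : S%:R <= (count_sqfree l X)%:R + K * (X%:R / x.-1%:R + (S2card l X)%:R).
  apply: le_trans (_ : (count_sqfree l X +
    l ^ 2 * (\sum_(x <= p < S2bound l X) X %/ p ^ 2 + S2card l X))%:R <= _).
    by rewrite ler_nat count_sqfree_below_le.
  by rewrite natrD natrM natrD lerD2l ler_wpM2l ?lerD2r ?sum_divn_sq_le.
have err_ge0 : 0 <= K * (X%:R / x.-1%:R + (S2card l X)%:R) by rewrite mulr_ge0 ?addr_ge0.
have := count_sieved_dev x X; rewrite -(ler_nat R) in sqfree_le_S.
by rewrite !ler_norml => /andP[lo hi]; apply/andP; split; lra.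
Qed.

Lemma count_sqfree_ratio_dev x X : (1 < x)%N -> (0 < X)%N ->
  `|(count_sqfree l X)%:R / X%:R - Cpart R l x| <=
    K / x.-1%:R + ((sq_primorial x)%:R + 1) / X%:R + K * ((S2card l X)%:R / X%:R).
Proof.
move=> x_gt1 X_gt0; have X_neq0 : X%:R != 0 :> R by rewrite pnatr_eq0 -lt0n.
have x1_neq0 : x.-1%:R != 0 :> R by rewrite pnatr_eq0 -lt0n -ltnS prednK // ltnW.
have -> : (count_sqfree l X)%:R / X%:R - Cpart R l x =
          ((count_sqfree l X)%:R - X%:R * Cpart R l x) / X%:R by field.
rewrite normrM normfV normr_nat ler_pdivrMr ?ltr0n //.
have -> : (K / x.-1%:R + ((sq_primorial x)%:R + 1) / X%:R +
           K * ((S2card l X)%:R / X%:R)) * X%:R =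
          (sq_primorial x)%:R + 1 + K * (X%:R / x.-1%:R + (S2card l X)%:R).
  by field; rewrite x1_neq0 X_neq0.
exact: count_sqfree_dev.
Qed.

End SieveAsymptotics.

Section Convergence.

Variable R : realType.
Local Open Scope classical_set_scope.
Local Open Scope ring_scope.

Lemma cvg_ratio0 (u : nat -> R) : (forall n, 0 <= u n) ->
    (forall eps, 0 < eps -> exists N, forall n, (N <= n)%N -> u n <= eps * n%:R) ->
  (fun n => u n / n%:R) @ \oo --> 0.
Proof.
move=> u_ge0 u_small; apply/cvgrPdist_le => eps eps_gt0.
have [N u_le] := u_small eps eps_gt0; exists N.+1 => // n /= N_lt_n.
rewrite sub0r normrN ger0_norm ?divr_ge0 // ler_pdivrMr ?ltr0n ?(leq_trans _ N_lt_n) //.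
exact/u_le/ltnW.
Qed.

Lemma cvg_diagonal (u c e f g : nat -> R) (C : R) (x0 : nat) :
    c @ \oo --> C -> e @ \oo --> 0 -> g @ \oo --> 0 ->
    (forall x X, (x0 <= x)%N -> (0 < X)%N -> `|u X - c x| <= e x + f x / X%:R + g X) ->
  u @ \oo --> C.
Proof.
move=> cC e0 g0 dev; apply/cvgrPdist_le => eps eps_gt0.
have eps4_gt0 : 0 < eps / 4 by rewrite divr_gt0.
have [x [x0_le_x cx_near ex_small]] :
    exists x, [/\ (x0 <= x)%N, `|C - c x| <= eps / 4 & `|e x| <= eps / 4].
  near \oo => x; exists x; split.
  - by near: x; exists x0.
  - by near: x; move/cvgrPdist_le : cC; apply.
  - near: x; move/cvgrPdist_le : e0 => /(_ _ eps4_gt0).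
    by apply: filterS => y; rewrite sub0r normrN.
near=> X.
have X_gt0 : (0 < X)%N by near: X; exists 1%N.
have gX_small : `|g X| <= eps / 4.
  near: X; move/cvgrPdist_le : g0 => /(_ _ eps4_gt0).
  by apply: filterS => y; rewrite sub0r normrN.
have fX_small : f x / X%:R <= eps / 4.
  rewrite ler_pdivrMr ?ltr0n // mulrC -ler_pdivrMr //.
  by near: X; apply: (cvgryPge _).1; exact: cvgr_idn.
have := dev x X x0_le_x X_gt0; have := ler_distD (c x) C (u X).
have := ler_norm (e x); have := ler_norm (g X); rewrite [`|u X - _|]distrC.
lra.
Unshelve. all: by end_near.
Qed.

End Convergence.

Local Open Scope classical_set_scope.
Local Open Scope ring_scope.

Lemma count_sqfree_density (R : realType) l (C : R) : prime l ->
    (forall eps : R, 0 < eps ->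
       exists T0, forall T, (T0 <= T)%N -> (S2card l T)%:R <= eps * T%:R) ->
    Cpart R l @ \oo --> C ->
  (fun X => (count_sqfree l X)%:R / X%:R) @ \oo --> C.
Proof.
move=> l_pr S2_small cvg_Cpart.
apply: (@cvg_diagonal _ _ (Cpart R l) (fun x => (l ^ 2)%:R / x.-1%:R)
          (fun x => (sq_primorial x)%:R + 1)
          (fun X => (l ^ 2)%:R * ((S2card l X)%:R / X%:R)) _ 2) => //.
- rewrite -cvg_shiftS -cvg_shiftS.
  by have := cvgMl_tmp (a := (l ^ 2)%:R) (@cvg_harmonic R); rewrite mulr0; apply.
- have := cvgMl_tmp (a := (l ^ 2)%:R) (cvg_ratio0 (fun T => ler0n _ _) S2_small).
  by rewrite mulr0; apply.
- by move=> x X; apply: count_sqfree_ratio_dev.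
Qed.

Theorem theorem2 (R : realType) (l : nat) :
  prime l -> odd l ->
  (forall eps : R, 0 < eps ->
     exists T0 : nat, forall T : nat, (T0 <= T)%N -> (S2card l T)%:R <= eps * T%:R) ->
  exists C : R,
    (Cpart R l @ \oo --> C) /\
    ((fun X : nat => (count_sqfree l X)%:R / (C * X%:R)) @ \oo --> (1 : R)).
Proof.
move=> l_pr _ S2_small.
have [C cvg_Cpart C_gt0] := Cpart_cvg_gt0 R l_pr.
exists C; split => //.
have density := count_sqfree_density l_pr S2_small cvg_Cpart.
have -> : (fun X : nat => (count_sqfree l X)%:R / (C * X%:R)) =
          (fun X => (count_sqfree l X)%:R / X%:R * C^-1).
  by apply/funext => X; rewrite invfM mulrA mulrAC.
by have := cvgMr_tmp (b := C^-1) density; rewrite divff ?lt0r_neq0 //; apply.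
Qed.
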